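(* Let $q,n\ge 2$ and $0<d\le n$ be integers with $(q,d)\neq(2,n)$, and let $G=H_q(n,d)$. (a) If $q\ge 3$, then the graph distance between any two vertices of $G$ is at most $2$, and $\mathrm{girth}(G)=3$. (b) If $q=2$ and $d\le \frac{2n}{3}$, then $\mathrm{girth}(G)=3$. (c) If $q=2$ and $\frac{2n}{3}<d<n$, then $\mathrm{girth}(G)=4$; moreover, $G$ contains a cycle of odd length.
   Context: $\mathbb{Z}_q=\mathbb{Z}/q\mathbb{Z}$. For $x,y\in\mathbb{Z}_q^n$, $\mathrm{d}(x,y)=|\{i: x_i\neq y_i\}|$ is the Hamming distance. The Hamming-distance graph $H_q(n,d)$ is the simple undirected graph with vertex set $\mathbb{Z}_q^n$ in which $x,y$ are adjacent iff $\mathrm{d}(x,y)\ge d$. The girth is the length of a shortest cycle. *)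

From mathcomp Require Import all_boot.
Set Implicit Arguments. Unset Strict Implicit. Unset Printing Implicit Defensive.

(* Vertices of H_q(n,d): words of length n over the alphabet Z_q,
   represented as 'I_q (only equality of letters matters). *)
Definition word (q n : nat) := {ffun 'I_n -> 'I_q}.

Definition hamming q n (x y : word q n) : nat := #|[set i | x i != y i]|.

Definition hadj q n d : rel (word q n) :=
  fun x y => (x != y) && (d <= hamming x y).

Definition gdist_le (T : eqType) (e : rel T) (x y : T) (k : nat) : Prop :=
  exists p : seq T, [/\ path e x p, last x p = y & size p <= k].

Definition is_cycle (T : eqType) (e : rel T) (s : seq T) : Prop :=
  3 <= size s /\ ucycle e s.

Definition girth_eq (T : eqType) (e : rel T) (g : nat) : Prop :=
  (exists s, is_cycle e s /\ size s = g) /\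
  (forall s, is_cycle e s -> g <= size s).

Definition has_odd_cycle (T : eqType) (e : rel T) : Prop :=
  exists s, is_cycle e s /\ odd (size s).

From mathcomp Require Import all_boot.
From mathcomp Require Import zify.

(* For q >= 3, any two words x, y admit a word z that differs from both in
   every coordinate (choose a third letter coordinatewise); z is adjacent to
   x and y, and iterating the construction yields a triangle.
   For q = 2, the three pairwise distances of x, y, z sum to at most 2n, since
   each coordinate contributes 0 or 2; hence there is no triangle when 2n < 3d.
   All the cycles needed are made of prefix words (the indicator of the first
   a coordinates, possibly complemented), whose distances are |a - b| or
   n - |a - b|: a triangle when 3d <= 2n, a 4-cycle, and the odd cycle
   v_0, ..., v_m with v_j of prefix j, complemented for odd j, where m is the
   even number among d, d + 1. *)
Set Implicit Arguments.
Unset Strict Implicit.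
Unset Printing Implicit Defensive.

Section Hamming.
Variables q n : nat.
Implicit Types x y z : word q n.

Lemma hamming_sum x y : hamming x y = \sum_(i < n) (x i != y i).
Proof. by rewrite /hamming -sum1dep_card big_mkcond. Qed.

Lemma hamming_eq0 x y : (hamming x y == 0) = (x == y).
Proof.
rewrite cards_eq0; apply/eqP/eqP => [/setP xy | ->].
  by apply/ffunP => i; move: (xy i); rewrite !inE => /negbFE/eqP.
by apply/setP => i; rewrite !inE eqxx.
Qed.

Lemma hamming_full x y : (forall i, x i != y i) -> hamming x y = n.
Proof. by move=> xy; rewrite -[RHS]card_ord; apply: eq_card => i; rewrite inE xy. Qed.

Lemma hadjE d x y : 0 < d -> hadj d x y = (d <= hamming x y).
Proof.
move=> d_gt0; rewrite /hadj; case: eqVneq => [<-|//].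
have /eqP -> : hamming x x == 0 by rewrite hamming_eq0.
by rewrite leqNgt d_gt0.
Qed.

Lemma hadj_irr d : irreflexive (@hadj q n d).
Proof. by move=> x; rewrite /hadj eqxx. Qed.

End Hamming.

Lemma path_iota (r : rel nat) m L :
  (forall j, m <= j < m + L -> r j j.+1) -> path r m (iota m.+1 L).
Proof.
elim: L m => [//|L IHL] m rS /=; apply/andP; split.
  by apply: rS; rewrite leqnn addnS ltnS leq_addr.
by apply: IHL => j /andP[mj jL]; apply: rS; rewrite ltnW //= -addSnnS.
Qed.

Lemma last_iota m L : last m (iota m.+1 L) = m + L.
Proof. by elim: L m => [|L IHL] m /=; rewrite ?addn0 // IHL addnS. Qed.

Section Cycles.
Variables (T : eqType) (e : rel T).

Lemma girth_eq3 x y z :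
  irreflexive e -> e x y -> e y z -> e z x -> girth_eq e 3.
Proof.
move=> e_irr exy eyz ezx; split=> [|s []//].
have neq u w : e u w -> u != w by apply: contraTneq => ->; rewrite e_irr.
exists [:: x; y; z]; split=> //; split=> //.
rewrite /ucycle /= exy eyz ezx !inE negb_or.
by rewrite (neq _ _ exy) (neq _ _ eyz) eq_sym (neq _ _ ezx).
Qed.

Lemma girth_eq4 s :
  (forall x y z, e x y -> e y z -> ~~ e z x) ->
  is_cycle e s -> size s = 4 -> girth_eq e 4.
Proof.
move=> no_triangle s_cycle s4; split; first by exists s.
move=> [|x [|y [|z [|w t]]]] [] //= _ /andP[].
rewrite /cycle /= => /and4P[exy eyz ezx _].
by rewrite (negbTE (no_triangle _ _ _ exy eyz)) in ezx.
Qed.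

Lemma ucycle_map_iota (v : nat -> T) m :
  {in gtn m.+1 &, injective v} ->
  (forall j, j < m -> e (v j) (v j.+1)) -> e (v m) (v 0) ->
  ucycle e [seq v j | j <- iota 0 m.+1].
Proof.
move=> v_inj e_step e_close; apply/andP; split.
  rewrite /= rcons_path path_map last_map last_iota e_close andbT.
  by apply: path_iota => j /andP[_ jm]; apply: e_step.
rewrite map_inj_in_uniq ?iota_uniq // => i j.
by rewrite !mem_iota; apply: v_inj.
Qed.

End Cycles.

Definition bit (b : bool) : 'I_2 := Ordinal (leq_b1 b : b < 2).

Lemma bit_inj : injective bit.
Proof. by case; case. Qed.

Lemma exists_third_letter q (a b : 'I_q) :
  2 < q -> exists c : 'I_q, (c != a) && (c != b).
Proof.
move=> q_gt2; have : 0 < #|~: [set a; b]|.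
  by move: (cardsC [set a; b]); rewrite cards2 card_ord; case: (a != b); lia.
by case/card_gt0P=> c; rewrite !inE negb_or; exists c.
Qed.

Lemma exists_far_word q n (x y : word q n) : 2 < q ->
  exists z : word q n, forall i, (z i != x i) && (z i != y i).
Proof.
move=> q_gt2.
have /fin_all_exists[f fP] : forall i, exists c : 'I_q, (c != x i) && (c != y i).
  by move=> i; apply: exists_third_letter.
by exists [ffun i => f i] => i; rewrite ffunE.
Qed.

Section Prefix.
Variable n : nat.

Lemma card_ord_lt a : a <= n -> #|[set i : 'I_n | i < a]| = a.
Proof.
move=> a_le_n; rewrite -sum1dep_card -(big_ord_widen _ (fun=> 1) a_le_n).
by rewrite sum1_card card_ord.
Qed.

Lemma card_prefix_neq a b : a <= n -> b <= n ->
  #|[set i : 'I_n | (i < a) != (i < b)]| = maxn a b - minn a b.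
Proof.
wlog ab : a b / a <= b => [hwlog an bn|an bn].
  case/orP: (leq_total a b) => [ab|ba]; first exact: hwlog.
  by rewrite maxnC minnC -hwlog //; apply: eq_card => i; rewrite !inE eq_sym.
have -> : [set i : 'I_n | (i < a) != (i < b)] =
          [set i : 'I_n | i < b] :\: [set i : 'I_n | i < a].
  by apply/setP => i; rewrite !inE; case: (ltnP i a); case: (ltnP i b) => //; lia.
rewrite cardsD (setIidPr _) ?card_ord_lt //; first lia.
by apply/subsetP => i; rewrite !inE => ia; apply: leq_trans ab.
Qed.

End Prefix.

Section Binary.
Variable n : nat.
Implicit Types x y z : word 2 n.

Definition prefix_word a c : word 2 n :=
  [ffun i : 'I_n => bit ((i < a) (+) c)].

Lemma hamming_prefix_word a b c : a <= n -> b <= n ->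
  hamming (prefix_word a c) (prefix_word b c) = maxn a b - minn a b.
Proof.
move=> an bn; rewrite -(@card_prefix_neq n a b) //; apply: eq_card => i.
rewrite !inE !ffunE (inj_eq bit_inj).
by case: c; rewrite ?addbT ?addbF ?(inj_eq negb_inj).
Qed.

Lemma hamming_prefix_word_negb a b c : a <= n -> b <= n ->
  hamming (prefix_word a c) (prefix_word b (~~ c)) = n - (maxn a b - minn a b).
Proof.
move=> an bn; rewrite -(@card_prefix_neq n a b) // -[n in n - _]card_ord.
rewrite -(cardsC [set i : 'I_n | (i < a) != (i < b)]) addKn.
apply: eq_card => i; rewrite !inE !ffunE (inj_eq bit_inj).
by case: c; case: (i < a); case: (i < b).
Qed.

Lemma hamming_binary_triangle x y z :
  hamming x y + hamming y z + hamming z x <= 2 * n.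
Proof.
rewrite !hamming_sum -!big_split /= mulnC -[n in n * 2]card_ord -sum_nat_const.
apply: leq_sum => i _; move: (x i) (y i) (z i).
by do 3!case=> [[|[|?]] ?].
Qed.

End Binary.

Section LargeAlphabet.
Variables q n d : nat.
Hypotheses (q_gt2 : 2 < q) (d_gt0 : 0 < d) (d_le_n : d <= n).
Implicit Types x y : word q n.

Lemma hadj_far x y : (forall i, x i != y i) -> hadj d x y.
Proof. by move=> xy; rewrite hadjE // hamming_full. Qed.

Lemma hamming_graph_dist_le2 x y : gdist_le (hadj d) x y 2.
Proof.
have [z zP] := exists_far_word x y q_gt2.
exists [:: z; y]; split=> //=.
by rewrite !hadj_far // => i; case/andP: (zP i) => // zx _; rewrite eq_sym.
Qed.

Lemma hamming_graph_girth3 : girth_eq (@hadj q n d) 3.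
Proof.
pose x : word q n := [ffun=> Ordinal (ltnW (ltnW q_gt2))].
have [y yP] := exists_far_word x x q_gt2.
have [z zP] := exists_far_word x y q_gt2.
apply: (@girth_eq3 _ _ x y z (@hadj_irr _ _ d)); apply: hadj_far => i.
- by case/andP: (yP i) => yx _; rewrite eq_sym.
- by case/andP: (zP i) => _ zy; rewrite eq_sym.
- by case/andP: (zP i).
Qed.

End LargeAlphabet.

Section BinaryGraph.
Variables n d : nat.
Implicit Types x y z : word 2 n.

Lemma binary_hamming_graph_girth3 :
  0 < d -> 3 * d <= 2 * n -> girth_eq (@hadj 2 n d) 3.
Proof.
move=> d_gt0 dn; have d_le_n : d <= n by lia.
apply: (@girth_eq3 _ _ (prefix_word n 0 false) (prefix_word n d false)
                       (prefix_word n (n - d) true) (@hadj_irr _ _ d)).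

- by rewrite hadjE // hamming_prefix_word //; lia.
- by rewrite hadjE // hamming_prefix_word_negb ?leq_subr //; lia.
- by rewrite hadjE // hamming_prefix_word_negb ?leq_subr //; lia.
Qed.

Lemma binary_hamming_graph_triangle_free x y z : 2 * n < 3 * d ->
  hadj d x y -> hadj d y z -> ~~ hadj d z x.
Proof.
move=> dn /andP[_ hxy] /andP[_ hyz]; apply/negP => /andP[_ hzx].
by have := hamming_binary_triangle x y z; lia.
Qed.

Lemma binary_hamming_graph_girth4 :
  2 * n < 3 * d -> d < n -> girth_eq (@hadj 2 n d) 4.
Proof.
move=> dn d_lt_n; have d_gt0 : 0 < d by lia.
apply: (@girth_eq4 _ _ [:: prefix_word n 0 false; prefix_word n 0 true;
                           prefix_word n 1 false; prefix_word n 1 true]) => //.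
  by move=> x y z; apply: binary_hamming_graph_triangle_free.
split=> //; rewrite /ucycle /= !hadjE // !inE !negb_or -!hamming_eq0.
rewrite !hamming_prefix_word ?hamming_prefix_word_negb //; lia.
Qed.

Lemma binary_hamming_graph_odd_cycle :
  0 < d -> d < n -> has_odd_cycle (@hadj 2 n d).
Proof.
move=> d_gt0 d_lt_n; pose m := d + odd d.
have [m_gt1 m_even] : 1 < m /\ odd m = false by rewrite /m; lia.
have /andP[d_le_m m_le_n] : d <= m <= n by rewrite /m; lia.
pose v j := prefix_word n j (odd j).
exists [seq v j | j <- iota 0 m.+1]; rewrite size_map size_iota oddS m_even.
split=> //; split; first by rewrite size_map size_iota.
apply: ucycle_map_iota.
- move=> a b; rewrite !inE /= !ltnS => a_le_m b_le_m /eqP; rewrite -hamming_eq0 /v.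
  have [a_le_n b_le_n] := (leq_trans a_le_m m_le_n, leq_trans b_le_m m_le_n).
  case oa: (odd a); case ob: (odd b);
    rewrite ?hamming_prefix_word ?hamming_prefix_word_negb //; lia.
- by move=> j jm; rewrite /v oddS hadjE // hamming_prefix_word_negb; lia.
- by rewrite /v m_even hadjE // hamming_prefix_word; lia.
Qed.

End BinaryGraph.

Theorem proposition2p3 (q n d : nat) :
  2 <= q -> 2 <= n -> 0 < d -> d <= n -> ~ (q = 2 /\ d = n) ->
  [/\ (3 <= q ->
         (forall x y : word q n, gdist_le (@hadj q n d) x y 2) /\
         girth_eq (@hadj q n d) 3),
      (q = 2 -> 3 * d <= 2 * n -> girth_eq (@hadj q n d) 3)
    & (q = 2 -> 2 * n < 3 * d -> d < n ->
         girth_eq (@hadj q n d) 4 /\ has_odd_cycle (@hadj q n d))].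
Proof.
move=> _ _ d_gt0 d_le_n _; split.
- move=> q_gt2; split; last exact: hamming_graph_girth3.
  by move=> x y; apply: hamming_graph_dist_le2.
- by move=> ->; apply: binary_hamming_graph_girth3.
- move=> -> dn d_lt_n; split; first exact: binary_hamming_graph_girth4.
  exact: binary_hamming_graph_odd_cycle.
Qed.
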